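(* Let $E$ be locally complete and let $G\subset E'$ be a linear subspace which determines boundedness. Let $(T^{E}_{m},T^{\mathbb{K}}_{m})_{m\in\mathcal{M}}$ be a defining family for $(\mathcal{FV},E)$ and a strong, consistent family for $(\mathcal{FW},E)$, where $\mathcal{FV}(\Omega)$ is a Banach space with $\mathcal{V}=(\nu_{1,1,m})_{m\in M_1}$ whose closed unit ball $B_{\mathcal{FV}(\Omega)}$ is a compact subset of $\mathcal{FW}(\Omega)$, and let $U$ be a set of uniqueness for $\mathcal{FV}(\Omega)$. Then the map \[ R_{U,G}\colon S\bigl(\{u\in\mathcal{FW}(\Omega)\varepsilon E\;|\;u(B_{\mathcal{FV}(\Omega)}^{\circ\mathcal{FW}(\Omega)'})\text{ is bounded in }E\}\bigr)\to\mathcal{FV}_G(U,E),\quad f\mapsto(T^E_m(f)(x))_{(m,x)\in U}, \] is surjective.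
   Context: $\mathbb{K}\in\{\mathbb{R},\mathbb{C}\}$; $E$ is a non-trivial locally convex Hausdorff space over $\mathbb{K}$ with a directed fundamental system of seminorms $(p_\alpha)_{\alpha\in\mathfrak{A}}$ (for $E=\mathbb{K}$: $\{|\cdot|\}$); $E'$ its dual. $E$ is locally complete if for every closed bounded absolutely convex $D\subset E$ the space $\bigcup_n nD$ normed by the gauge of $D$ is a Banach space. $G\subset E'$ determines boundedness if every $\sigma(E,G)$-bounded subset of $E$ is bounded. Weighted function spaces: given non-empty sets $\Omega,J,L$, non-empty sets $(M_l)_{l\in L}$ and a family $\mathcal{V}=((\nu_{j,l,m})_{m\in M_l})_{j\in J,l\in L}$ of functions $\nu_{j,l,m}\colon\Omega\to[0,\infty)$ such that for all $x\in\Omega$, $l\in L$ there is $j$ with $\nu_{j,l,m}(x)>0$ for all $m\in M_l$; $\mathcal{M}_{\mathrm{top}}:=\bigcup_lM_l$, sets $\mathcal{M}_0,\mathcal{M}_r$, the three pairwise disjoint, $\mathcal{M}$ their union; non-empty sets $(\omega_m)_{m\in\mathcal{M}}$ with $\Omega\subset\omega_m$ for $m\in\mathcal{M}_{\mathrm{top}}$; for $F\in\{E,\mathbb{K}\}$ linear maps $T^F_m\colon\operatorname{dom}T^F_m\subset F^\Omega\to F^{\omega_m}$. $\mathcal{FV}(\Omega,F)$ is the set of $f\in\bigcap_{m\in\mathcal{M}}\operatorname{dom}T^F_m\cap\bigcap_{m\in\mathcal{M}_0}\ker T^F_m$ with $|f|_{j,l,\alpha}:=\sup_{x\in\Omega,m\in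 M_l}p_\alpha(T^F_m(f)(x))\nu_{j,l,m}(x)<\infty$ for all $j,l,\alpha$, with these seminorms; $\mathcal{FV}(\Omega):=\mathcal{FV}(\Omega,\mathbb{K})$; $T^F_{m,x}(f):=T^F_m(f)(x)$. Such a space is a dom-space if its seminorms are directed and, in the scalar case, point evaluations $\delta_x$ are continuous. If $\mathcal{FV}(\Omega)$ and $\mathcal{FV}(\Omega,E)$ are dom-spaces built from the same data with operators $T^{\mathbb{K}}_m$ resp. $T^E_m$, $(T^E_m,T^{\mathbb{K}}_m)_{m\in\mathcal{M}}$ is called a defining family for $(\mathcal{FV},E)$. $\mathcal{FW}(\Omega)$, $\mathcal{FW}(\Omega,E)$ denote spaces of the same type built from the same $\Omega$, index set $\mathcal{M}$, sets $\omega_m$ and operators, but with another family of weights $\mathcal{W}$. $\mathcal{FW}(\Omega)\varepsilon E$ is the space of continuous linear maps $\mathcal{FW}(\Omega)'_\kappa\to E$ ($\kappa$: uniform convergence on absolutely convex compact sets), and $S(u)(x):=u(\delta_x)$. The family is consistent for $(\mathcal{FW},E)$ if for all $u\in\mathcal{FW}(\Omega)\varepsilon E$, $m\in\mathcal{M}$, $x\in\omega_m$: $S(u)\in\operatorname{dom}T^E_m$, $T^{\mathbb{K}}_{m,x}|_{\mathcal{FW}(\Omega)}\in\mathcal{FW}(\Omega)'$ and $T^E_m(S(u))(x)=u(T^{\mathbb{K}}_{m,x})$; strong for $(\mathcal{FW},E)$ if for all $e'\in E'$, $f\in\mathcal{FW}(\Omega,E)$, $m$: $e'\circ f\in\operatorname{dom}T^{\mathbb{K}}_m$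 and $T^{\mathbb{K}}_m(e'\circ f)=e'\circ T^E_m(f)$ on $\omega_m$. $B_{\mathcal{FV}(\Omega)}^{\circ\mathcal{FW}(\Omega)'}:=\{y'\in\mathcal{FW}(\Omega)': |y'(z)|\le1\ \forall z\in B_{\mathcal{FV}(\Omega)}\}$. $U\subset\bigcup_m\{m\}\times\omega_m$ is a set of uniqueness for $\mathcal{FV}(\Omega)$ if $T^{\mathbb{K}}_{m,x}\in\mathcal{FV}(\Omega)'$ for $(m,x)\in U$ and $f\in\mathcal{FV}(\Omega)$ with $T^{\mathbb{K}}_m(f)(x)=0$ for all $(m,x)\in U$ is $0$. $\mathcal{FV}_G(U,E)$ is the set of $f\colon U\to E$ such that for each $e'\in G$ there is $f_{e'}\in\mathcal{FV}(\Omega)$ with $T^{\mathbb{K}}_m(f_{e'})(x)=e'(f(m,x))$ for all $(m,x)\in U$. Under the hypotheses the map $R_{U,G}$ takes values in $\mathcal{FV}_G(U,E)$. *)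

From mathcomp Require Import all_boot all_order all_algebra.
From mathcomp Require Import reals complex.
From Stdlib Require List.
Set Implicit Arguments.
Unset Strict Implicit.
Unset Printing Implicit Defensive.
Import Order.TTheory GRing.Theory Num.Theory.
Local Open Scope ring_scope.

Section LCS.
Variables (K : numFieldType) (V : lmodType K).

Definition is_seminorm (q : V -> K) : Prop :=
  [/\ forall x, 0 <= q x,
      forall (a : K) x, q (a *: x) = `|a| * q x
    & forall x y, q (x + y) <= q x + q y].

(** (p_a)_{a in A} is a directed fundamental system of seminorms of a
    non-trivial locally convex Hausdorff space *)
Definition nontrivial_lc_hausdorff (A : Type) (p : A -> V -> K) : Prop :=
  [/\ inhabited A,
      forall a, is_seminorm (p a),
      (forall a b, exists c (C : K), 0 < C /\
          forall x, p a x <= C * p c x /\ p b x <= C * p c x),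
      (forall x, (forall a, p a x = 0) -> x = 0)
    & exists x : V, x <> 0].

Variables (A : Type) (p : A -> V -> K).

Definition lc_closed (D : V -> Prop) : Prop :=
  forall x, (forall a (eps : K), 0 < eps -> exists d, D d /\ p a (x - d) < eps) -> D x.

Definition lc_bounded (B : V -> Prop) : Prop :=
  forall a, exists C : K, forall x, B x -> p a x <= C.

Definition abs_convex (D : V -> Prop) : Prop :=
  forall x y (a b : K), D x -> D y -> `|a| + `|b| <= 1 -> D (a *: x + b *: y).

Definition in_dil (D : V -> Prop) (t : K) (y : V) : Prop :=
  exists d, D d /\ y = t *: d.

(** E_D = \bigcup_n nD with the gauge of D is a Banach space, written out:
    every gauge-Cauchy sequence of E_D gauge-converges in E_D
    (gauge(y) <= eps  <->  y \in eps D  for eps > 0, D absolutely convex). *)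
Definition gauge_complete (D : V -> Prop) : Prop :=
  forall x : nat -> V,
    (forall n, exists k : nat, in_dil D k%:R (x n)) ->
    (forall eps : K, 0 < eps -> exists N, forall n m, (N <= n)%N -> (N <= m)%N ->
        in_dil D eps (x n - x m)) ->
    exists y, (exists k : nat, in_dil D k%:R y) /\
      forall eps : K, 0 < eps -> exists N, forall n, (N <= n)%N -> in_dil D eps (x n - y).

Definition locally_complete : Prop :=
  forall D, lc_closed D -> lc_bounded D -> abs_convex D -> gauge_complete D.

Definition lin_on (P : V -> Prop) (f : V -> K) : Prop :=
  forall (a : K) x y, P x -> P y -> f (a *: x + y) = a * f x + f y.

Definition in_dual (e' : V -> K) : Prop :=
  lin_on (fun _ => True) e' /\ exists a (C : K), forall x, `|e' x| <= C * p a x.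

Definition lin_subspace_of_dual (G : (V -> K) -> Prop) : Prop :=
  [/\ forall g, G g -> in_dual g,
      G (fun _ => 0)
    & forall (a : K) g h, G g -> G h -> G (fun x => a * g x + h x)].

Definition determines_boundedness (G : (V -> K) -> Prop) : Prop :=
  forall B : V -> Prop,
    (forall g, G g -> exists C : K, forall x, B x -> `|g x| <= C) -> lc_bounded B.

End LCS.

Section Weighted.
Variables (K : numFieldType) (Omega X MM : Type) (emb : Omega -> X).
Variables (omega : MM -> X -> Prop).
Variables (F : lmodType K) (B : Type) (q : B -> F -> K).
Variables (dom : MM -> (Omega -> F) -> Prop) (T : MM -> (Omega -> F) -> X -> F).
Variables (M0 : MM -> Prop).
Variables (J L : Type) (Ml : L -> MM -> Prop) (nu : J -> L -> MM -> Omega -> K).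

Definition sn_le (f : Omega -> F) (j : J) (l : L) (b : B) (c : K) : Prop :=
  forall x m, Ml l m -> q b (T m f (emb x)) * nu j l m x <= c.

Definition FVspace (f : Omega -> F) : Prop :=
  [/\ forall m, dom m f,
      forall m, M0 m -> forall y, omega m y -> T m f y = 0
    & forall j l b, exists c, sn_le f j l b c].

Definition sn_directed : Prop :=
  forall j1 l1 b1 j2 l2 b2, exists j l b (C : K), 0 < C /\
    forall f, FVspace f -> forall c, sn_le f j l b c ->
      sn_le f j1 l1 b1 (C * c) /\ sn_le f j2 l2 b2 (C * c).

End Weighted.

Definition linear_family (K : numFieldType) (Omega X MM : Type)
  (omega : MM -> X -> Prop) (F : lmodType K)
  (dom : MM -> (Omega -> F) -> Prop) (T : MM -> (Omega -> F) -> X -> F) : Prop :=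
  forall m, dom m (fun _ => 0) /\
    forall (a : K) f g, dom m f -> dom m g ->
      dom m (fun w => a *: f w + g w) /\
      forall y, omega m y -> T m (fun w => a *: f w + g w) y = a *: T m f y + T m g y.

(** scalar-valued specialisation: F = K, single seminorm |.| *)
Definition absK (K : numFieldType) (_ : unit) (y : K^o) : K := `|(y : K)|.

Section Scalar.
Variables (K : numFieldType) (Omega X MM : Type) (emb : Omega -> X).
Variables (omega : MM -> X -> Prop).
Variables (dom : MM -> (Omega -> K^o) -> Prop) (T : MM -> (Omega -> K^o) -> X -> K^o).
Variables (M0 : MM -> Prop).
Variables (J L : Type) (Ml : L -> MM -> Prop) (nu : J -> L -> MM -> Omega -> K).

Definition FVs := FVspace emb omega (absK (K:=K)) dom T M0 Ml nu.
Definition sns (f : Omega -> K^o) j l c := sn_le emb (absK (K:=K)) T Ml nu f j l tt c.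

Definition scalar_dom_space : Prop :=
  sn_directed emb omega (absK (K:=K)) dom T M0 Ml nu /\
  forall x : Omega, exists j l (C : K),
    forall f, FVs f -> forall c, sns f j l c -> `|(f x : K)| <= C * c.

(** y' \in FV(Omega)' (functionals are total maps, only their values on
    FV(Omega) matter) *)
Definition sdual (y : (Omega -> K^o) -> K) : Prop :=
  (forall (a : K) f g, FVs f -> FVs g -> y (fun w => a *: f w + g w) = a * y f + y g) /\
  exists j l (C : K), forall f, FVs f -> forall c, sns f j l c -> `|y f| <= C * c.

(** open subsets of FV(Omega) for its locally convex topology
    (basic neighbourhoods by one seminorm suffice since it is directed) *)
Definition s_open (O : (Omega -> K^o) -> Prop) : Prop :=
  forall f, O f -> FVs f /\ exists j l (eps : K), 0 < eps /\
    forall g, FVs g -> (exists c, c < eps /\ sns (fun w => g w - f w) j l c) -> O g.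

Definition s_compact (C : (Omega -> K^o) -> Prop) : Prop :=
  (forall f, C f -> FVs f) /\
  forall (I : Type) (O : I -> (Omega -> K^o) -> Prop),
    (forall i, s_open (O i)) -> (forall f, C f -> exists i, O i f) ->
    exists s : seq I, forall f, C f -> exists2 i, List.In i s & O i f.

Definition s_abs_convex (C : (Omega -> K^o) -> Prop) : Prop :=
  forall f g (a b : K), C f -> C g -> `|a| + `|b| <= 1 ->
    C (fun w => a *: f w + b *: g w).

End Scalar.

(** The epsilon-product FW(Omega) eps E = L(FW(Omega)'_kappa, E):
    u is well defined on FW(Omega)' (depends only on restrictions to FW(Omega)),
    linear, and continuous for the topology of uniform convergence on
    absolutely convex compact subsets of FW(Omega). *)
Definition eps_prod (K : numFieldType) (V : lmodType K) (A : Type) (p : A -> V -> K)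
  (Omega X MM : Type) (emb : Omega -> X) (omega : MM -> X -> Prop)
  (dom : MM -> (Omega -> K^o) -> Prop) (T : MM -> (Omega -> K^o) -> X -> K^o)
  (M0 : MM -> Prop) (J L : Type) (Ml : L -> MM -> Prop) (nu : J -> L -> MM -> Omega -> K)
  (u : ((Omega -> K^o) -> K) -> V) : Prop :=
  let FW := FVs emb omega dom T M0 Ml nu in
  let FW' := sdual emb omega dom T M0 Ml nu in
  [/\ (forall y z, FW' y -> FW' z -> (forall f, FW f -> y f = z f) -> u y = u z),
      (forall (a : K) y z, FW' y -> FW' z -> u (fun f => a * y f + z f) = a *: u y + u z)
    & forall a, exists (Cp : (Omega -> K^o) -> Prop) (C : K),
        [/\ s_compact emb omega dom T M0 Ml nu Cp, s_abs_convex Cp &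
          forall y, FW' y -> forall c, (forall f, Cp f -> `|y f| <= c) -> p a (u y) <= C * c]].

Definition Smap (K : numFieldType) (V : lmodType K) (Omega : Type)
  (u : ((Omega -> K^o) -> K) -> V) : Omega -> V := fun w => u (fun f => f w).

Definition thm3p19_stmt (K : numFieldType) : Prop :=
  forall (V : lmodType K) (A : Type) (p : A -> V -> K)
    (G : (V -> K) -> Prop)
    (Omega X MM : Type) (emb : Omega -> X) (omega : MM -> X -> Prop)
    (M0 Mr : MM -> Prop)
    (domE : MM -> (Omega -> V) -> Prop) (TE : MM -> (Omega -> V) -> X -> V)
    (domK : MM -> (Omega -> K^o) -> Prop) (TK : MM -> (Omega -> K^o) -> X -> K^o)
    (nu : MM -> Omega -> K)
    (JW LW : Type) (MlW : LW -> MM -> Prop) (nuW : JW -> LW -> MM -> Omega -> K)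
    (U : MM -> X -> Prop),
  let Mtop := fun m => ~ M0 m /\ ~ Mr m in
  (* V = (nu_{1,1,m})_{m in M_1}: J = L = {1}, M_1 = M_top *)
  let MlV := fun (_ : unit) m => Mtop m in
  let nuV := fun (_ : unit) (_ : unit) m x => nu m x in
  let FV := FVs emb omega domK TK M0 MlV nuV in
  let FVE := FVspace emb omega p domE TE M0 MlV nuV in
  let FW := FVs emb omega domK TK M0 MlW nuW in
  let FWE := FVspace emb omega p domE TE M0 MlW nuW in
  let FW' := sdual emb omega domK TK M0 MlW nuW in
  let normV := fun f c => sns emb TK MlV nuV f tt tt c in
  let BFV := fun f => FV f /\ normV f 1 in
  let Bpolar := fun y => FW' y /\ forall f, BFV f -> `|y f| <= 1 in
  let epsE := eps_prod p emb omega domK TK M0 MlW nuW in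
  nontrivial_lc_hausdorff p -> locally_complete p ->
  lin_subspace_of_dual p G -> determines_boundedness p G ->
  (forall m, ~ (M0 m /\ Mr m)) ->
  (forall m, Mtop m -> forall x, omega m (emb x)) -> injective emb ->
  inhabited Omega ->
  (exists m, Mtop m) ->
  (forall m x, Mtop m -> 0 <= nu m x) ->
  (forall x m, Mtop m -> 0 < nu m x) ->
  inhabited JW -> inhabited LW ->
  (forall l, exists m, MlW l m) ->
  (forall m, Mtop m <-> exists l, MlW l m) ->
  (forall j l m x, 0 <= nuW j l m x) ->
  (forall x l, exists j, forall m, MlW l m -> 0 < nuW j l m x) ->
  linear_family omega domE TE -> linear_family omega domK TK ->
  (* defining family for (FV,E): FV(Omega), FV(Omega,E) are dom-spaces *)
  scalar_dom_space emb omega domK TK M0 MlV nuV ->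
  sn_directed emb omega p domE TE M0 MlV nuV ->
  (* FW(Omega) is a dom-space (needed for S to be defined) *)
  scalar_dom_space emb omega domK TK M0 MlW nuW ->
  (* strong for (FW,E) *)
  (forall e', in_dual p e' -> forall f, FWE f -> forall m,
      domK m (fun w => e' (f w)) /\
      forall y, omega m y -> TK m (fun w => e' (f w)) y = e' (TE m f y)) ->
  (* consistent for (FW,E) *)
  (forall u, epsE u -> forall m y, omega m y ->
      [/\ domE m (Smap u), FW' (fun f => TK m f y) &
          TE m (Smap u) y = u (fun f => TK m f y)]) ->
  (* FV(Omega) is a Banach space *)
  (forall s : nat -> Omega -> K^o, (forall n, FV (s n)) ->
     (forall eps : K, 0 < eps -> exists N, forall n k, (N <= n)%N -> (N <= k)%N ->
         normV (fun w => s n w - s k w) eps) ->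
     exists f, FV f /\ forall eps : K, 0 < eps -> exists N, forall n, (N <= n)%N ->
         normV (fun w => s n w - f w) eps) ->
  s_compact emb omega domK TK M0 MlW nuW BFV ->
  (* U is a set of uniqueness for FV(Omega) *)
  (forall m y, U m y -> omega m y) ->
  (forall m y, U m y -> sdual emb omega domK TK M0 MlV nuV (fun f => TK m f y)) ->
  (forall f, FV f -> (forall m y, U m y -> TK m f y = 0) -> forall w, f w = 0) ->
  forall g : MM -> X -> V,
    (forall e', G e' -> exists fe, FV fe /\ forall m y, U m y -> TK m fe y = e' (g m y)) ->
    exists u, [/\ epsE u,
      lc_bounded p (fun e => exists y, Bpolar y /\ e = u y) &
      forall m y, U m y -> TE m (Smap u) y = g m y].

(* For y in FW(Omega)', the value u(y) is forced by e'(u(y)) = y(f_e') for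
   e' in G, where f_e' in FV(Omega) represents e' on U; it is unique because a
   set G that determines boundedness separates points.  To construct it, one
   shows that y is a uniform limit on the compact absolutely convex ball B_FV
   of finite combinations z of the functionals T_{m,x}, (m,x) in U: otherwise
   minimising the squared distance of (Re (y - z_k))_k to an orthant over B_FV
   yields a point where all these real parts are large, contradicting that U is
   a set of uniqueness.  The combinations of the g(m,x) with the same
   coefficients form a Cauchy sequence in E_D, where
   D = {x | |e'(x)| <= |f_e'| for all e' in G} is closed, absolutely convex and,
   since G determines boundedness, bounded; local completeness of E provides
   the limit u(y).  The scalar field enters only through a real-part map, so
   K = R and K = C are treated at once. *)

From mathcomp Require Import all_boot all_order all_algebra.
From mathcomp Require Import reals complex.
From mathcomp Require Import boolp ring lra.
From Stdlib Require List.
Set Implicit Arguments. Unset Strict Implicit. Unset Printing Implicit Defensive.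
Import Order.TTheory GRing.Theory Num.Theory.
Local Open Scope ring_scope.

Lemma exists_seq_min (T : Type) (disp : Order.disp_t) (O : orderType disp)
    (F : T -> O) (x0 : T) (s : seq T) :
  exists x, forall y, List.In y s -> (F x <= F y)%O.
Proof.
elim: s => [|y s [x hx]]; first by exists x0.
have [le_yx|lt_xy] := leP (F y) (F x).
- by exists y => z /= [<-|/hx]; [exact: lexx | exact: le_trans].
- by exists x => z /= [<-|/hx]; [exact: ltW|].
Qed.

Section RealFieldFacts.
Variable R : realFieldType.

Lemma le0_of_le_small (a b : R) : (forall t, 0 < t -> t <= 1 -> a <= t * b) -> a <= 0.
Proof.
move=> H; rewrite leNgt; apply/negP => a_gt0.
have b1 : 0 < `|b| + 1 by rewrite ltr_wpDl.
pose t := Num.min 1 (a / (`|b| + 1)).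
have t_gt0 : 0 < t by rewrite lt_min ltr01 divr_gt0.
have t_small : t * (`|b| + 1) <= a by rewrite -ler_pdivlMr // ge_min lexx orbT.
have t1 : t <= 1 by rewrite ge_min lexx.
have := H t t_gt0 t1; have := ler_norm b; nra.
Qed.

Definition pos_part (a : R) := if 0 <= a then a else 0.

Lemma pos_part_ge0 a : 0 <= pos_part a.
Proof. by rewrite /pos_part; case: ifP. Qed.

Lemma pos_part_mul_ge0 a : 0 <= pos_part a * a.
Proof. by rewrite /pos_part; case: ifP => a0; rewrite ?mul0r ?mulr_ge0. Qed.

Lemma pos_part_lipschitz a b : `|pos_part a - pos_part b| <= `|a - b|.
Proof.
rewrite /pos_part; case: ifP => ha; case: ifP => hb; rewrite ?subrr ?normr0 //.
- move/negbT: hb; rewrite -ltNge => hb.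
  by rewrite subr0 (ger0_norm ha) ger0_norm; lra.
- move/negbT: ha; rewrite -ltNge => ha.
  by rewrite sub0r normrN (ger0_norm hb) ler0_norm; lra.
Qed.

Lemma pos_part_sqrB a x :
  pos_part (a - x) ^+ 2 <= pos_part a ^+ 2 - 2 * pos_part a * x + x ^+ 2.
Proof.
rewrite /pos_part; case: ifP => h1; case: ifP => h2.
- nra.
- have h3 : a < 0 by rewrite ltNge h2.
  nra.
- have h3 : a - x < 0 by rewrite ltNge h1.
  nra.
- have h3 : a - x < 0 by rewrite ltNge h1.
  have h4 : a < 0 by rewrite ltNge h2.
  nra.
Qed.

Definition sqdist_ge (eps t : R) := pos_part (eps - t) ^+ 2.

Lemma sqdist_ge_cont eps s eta : 0 < eta -> exists2 d, 0 < d &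
  forall t, `|t - s| <= d -> `|sqdist_ge eps t - sqdist_ge eps s| <= eta.
Proof.
move=> eta0; set b := pos_part (eps - s); have b0 : 0 <= b := pos_part_ge0 _.
have b1 : 0 < 1 + 2 * b by lra.
set d := Num.min 1 (eta / (1 + 2 * b)).
exists d => [|t ht]; first by rewrite lt_min ltr01 divr_gt0.
set a := pos_part (eps - t); have a0 : 0 <= a := pos_part_ge0 _.
have hab : `|a - b| <= d.
  apply: le_trans (pos_part_lipschitz _ _) _.
  by rewrite (_ : eps - t - (eps - s) = - (t - s)) ?normrN //; ring.
have d1 : d <= 1 by rewrite ge_min lexx.
have d2 : d * (1 + 2 * b) <= eta by rewrite -ler_pdivlMr // ge_min lexx orbT.
move: hab; rewrite /sqdist_ge -/a -/b !ler_norml => /andP [h1 h2].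
apply/andP; split; nra.
Qed.

End RealFieldFacts.

Section NumFieldFacts.
Variable K : numFieldType.

Lemma le_of_le_addM (x y t : K) : 0 <= t ->
  (forall e, 0 < e -> x <= y + t * e) -> x <= y.
Proof.
move=> t0 H; apply/ler_addgt0Pr => e e0.
have t1 : 0 < t + 1 by rewrite ltr_wpDl.
apply: le_trans (H (e / (t + 1)) (divr_gt0 e0 t1)) _.
rewrite lerD2l mulrA ler_pdivrMr // mulrDr mulr1 (mulrC t e) lerDl.
exact: ltW.
Qed.

Lemma norm_eq0_of_leM (a b : K) : 0 <= b ->
  (forall e, 0 < e -> `|a| <= e * b) -> a = 0.
Proof.
move=> b0 H; apply/normr0_eq0/eqP; rewrite eq_le normr_ge0 andbT.
by apply: (le_of_le_addM b0) => e e0; rewrite add0r mulrC H.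
Qed.

Lemma exists_rotation (w : K) : exists2 a : K, `|a| <= 1 & a * w = `|w|.
Proof.
have [->|w0] := eqVneq w 0; first by exists 0; rewrite ?normr0 ?mul0r.
exists (`|w| / w); last by rewrite mulfVK.
by rewrite normrM normfV normr_id divff ?normr_eq0.
Qed.

Lemma le_normM_of_leM (x c C : K) : 0 <= x -> 0 <= c -> x <= C * c -> x <= `|C| * c.
Proof.
move=> x0; rewrite le0r => /orP[/eqP -> | c_gt0]; first by rewrite !mulr0.
move=> le_x; have C0 : 0 <= C by rewrite -(pmulr_lge0 _ c_gt0) (le_trans x0).
by rewrite ger0_norm.
Qed.

End NumFieldFacts.

(** * Weighted spaces of scalar functions *)

Section LinearFamily.
Variables (K : numFieldType) (Omega X MM : Type) (omega : MM -> X -> Prop).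
Variables (F : lmodType K) (dom : MM -> (Omega -> F) -> Prop).
Variable (T : MM -> (Omega -> F) -> X -> F).
Hypothesis T_linear : linear_family omega dom T.

Lemma linfam_dom0 m : dom m (fun _ => 0).
Proof. exact: (T_linear m).1. Qed.

Lemma linfam_T0 m y : omega m y -> T m (fun _ => 0) y = 0.
Proof.
move=> hy; have := ((T_linear m).2 1 _ _ (linfam_dom0 m) (linfam_dom0 m)).2 y hy.
have -> : (fun _ : Omega => 1 *: (0 : F) + 0) = (fun _ => 0).
  by apply: funext => w; rewrite scaler0 addr0.
by rewrite scale1r => /eqP; rewrite -subr_eq subrr => /eqP.
Qed.

Lemma linfam_domZ m a f : dom m f -> dom m (fun w => a *: f w).
Proof.
move=> hf; have := ((T_linear m).2 a _ _ hf (linfam_dom0 m)).1.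
by have -> : (fun w => a *: f w + 0) = (fun w => a *: f w) by apply: funext => w; rewrite addr0.
Qed.

Lemma linfam_TZ m a f y : dom m f -> omega m y ->
  T m (fun w => a *: f w) y = a *: T m f y.
Proof.
move=> hf hy; have := ((T_linear m).2 a _ _ hf (linfam_dom0 m)).2 y hy.
have -> : (fun w => a *: f w + 0) = (fun w => a *: f w) by apply: funext => w; rewrite addr0.
by rewrite linfam_T0 // addr0.
Qed.

Lemma linfam_dom_comb m a b f g : dom m f -> dom m g ->
  dom m (fun w => a *: f w + b *: g w).
Proof. by move=> hf hg; exact: ((T_linear m).2 a _ _ hf (linfam_domZ b hg)).1. Qed.

Lemma linfam_T_comb m a b f g y : dom m f -> dom m g -> omega m y ->
  T m (fun w => a *: f w + b *: g w) y = a *: T m f y + b *: T m g y.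
Proof.
move=> hf hg hy; rewrite ((T_linear m).2 a _ _ hf (linfam_domZ b hg)).2 //.
by rewrite linfam_TZ.
Qed.

End LinearFamily.

Section WeightedScalar.
Variables (K : numFieldType) (Omega X MM : Type) (emb : Omega -> X).
Variables (omega : MM -> X -> Prop) (M0 : MM -> Prop).
Variables (dom : MM -> (Omega -> K^o) -> Prop) (T : MM -> (Omega -> K^o) -> X -> K^o).
Variables (J L : Type) (Ml : L -> MM -> Prop) (nu : J -> L -> MM -> Omega -> K).
Hypothesis T_linear : linear_family omega dom T.
Hypothesis nu_ge0 : forall j l m x, Ml l m -> 0 <= nu j l m x.
Hypothesis omega_emb : forall l m x, Ml l m -> omega m (emb x).

Local Notation FV := (FVs emb omega dom T M0 Ml nu).
Local Notation FV' := (sdual emb omega dom T M0 Ml nu).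
Local Notation sn := (sns emb T Ml nu).

Lemma sns_ge0 f j l c : inhabited Omega -> (exists m, Ml l m) -> sn f j l c -> 0 <= c.
Proof.
case=> x [m hm] /(_ x m hm); apply: le_trans.
by rewrite mulr_ge0 ?nu_ge0 ?normr_ge0.
Qed.

Lemma sns_le f j l c c' : sn f j l c -> c <= c' -> sn f j l c'.
Proof. by move=> h hc x m hm; apply: le_trans (h x m hm) hc. Qed.

Lemma FVs0 : FV (fun _ => 0).
Proof.
split=> [m | m _ y hy | j l b]; first exact: (linfam_dom0 T_linear).
- by rewrite (linfam_T0 T_linear).
exists 0 => x m hm.
by rewrite /absK (linfam_T0 T_linear) ?normr0 ?mul0r //; apply: omega_emb hm.
Qed.

Lemma sns_comb a b f g j l cf cg : (forall m, dom m f) -> (forall m, dom m g) ->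
  sn f j l cf -> sn g j l cg ->
  sn (fun w => a *: f w + b *: g w) j l (`|a| * cf + `|b| * cg).
Proof.
move=> df dg hcf hcg x m hm.
rewrite /absK (linfam_T_comb T_linear) //; last exact: omega_emb hm.
apply: le_trans (_ : `|a| * (`|T m f (emb x) : K| * nu j l m x) +
   `|b| * (`|T m g (emb x) : K| * nu j l m x) <= _); last first.
  by apply: lerD; apply: ler_wpM2l => //; [exact: hcf | exact: hcg].
rewrite !mulrA -mulrDl ler_wpM2r ?nu_ge0 //.
by apply: le_trans (ler_normD _ _) _; rewrite /GRing.scale /= !normrM.
Qed.

Lemma FVs_comb a b f g : FV f -> FV g -> FV (fun w => a *: f w + b *: g w).
Proof.
case=> df zf bf [dg zg bg]; split=> [m | m hm y hy | j l []].
- exact: (linfam_dom_comb T_linear).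
- by rewrite (linfam_T_comb T_linear) // zf // zg // !scaler0 addr0.
have [cf hcf] := bf j l tt; have [cg hcg] := bg j l tt.
by exists (`|a| * cf + `|b| * cg); apply: sns_comb.
Qed.

Lemma FVsZ a f : FV f -> FV (fun w => a *: f w).
Proof.
move=> hf; have := FVs_comb a 0 hf FVs0.
by have -> : (fun w => a *: f w + 0 *: (0 : K^o)) = (fun w => a *: f w)
  by apply: funext => w; rewrite scaler0 addr0.
Qed.

Lemma FVsB f g : FV f -> FV g -> FV (fun w => f w - g w).
Proof.
move=> hf hg; have := FVs_comb 1 (-1) hf hg.
by have -> : (fun w => 1 *: f w + (-1) *: g w) = (fun w => f w - g w)
  by apply: funext => w; rewrite scale1r scaleN1r.
Qed.

Lemma sdual0 y : FV' y -> y (fun _ => 0) = 0.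
Proof.
case=> y_lin _; have := y_lin (-1) _ _ FVs0 FVs0.
have -> : (fun _ : Omega => (-1) *: (0 : K^o) + 0) = (fun _ => 0).
  by apply: funext => w; rewrite scaler0 addr0.
by rewrite mulN1r addNr.
Qed.

Lemma sdualZ y a f : FV' y -> FV f -> y (fun w => a *: f w) = a * y f.
Proof.
move=> hy hf; have := hy.1 a _ _ hf FVs0.
have -> : (fun w => a *: f w + 0) = (fun w => a *: f w).
  by apply: funext => w; rewrite addr0.
by rewrite sdual0 // addr0.
Qed.

Lemma sdual_comb y a b f g : FV' y -> FV f -> FV g ->
  y (fun w => a *: f w + b *: g w) = a * y f + b * y g.
Proof.
move=> hy hf hg; have := hy.1 a _ (fun w => b *: g w) hf (FVsZ b hg).
by rewrite /= => ->; rewrite sdualZ.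
Qed.

Lemma sdualB y f g : FV' y -> FV f -> FV g -> y (fun w => f w - g w) = y f - y g.
Proof.
move=> hy hf hg; have := sdual_comb 1 (-1) hy hf hg.
have -> : (fun w => 1 *: f w + (-1) *: g w) = (fun w => f w - g w).
  by apply: funext => w; rewrite scale1r scaleN1r.
by rewrite mul1r mulN1r.
Qed.

Lemma sdual_cst0 : inhabited J -> inhabited L -> FV' (fun _ => 0).
Proof.
case=> j [l]; split=> [a f g _ _ | ]; first by rewrite mulr0 addr0.
by exists j, l, 0 => f _ c _; rewrite normr0 mul0r.
Qed.

Lemma sdual_lin_closed y z a : sn_directed emb omega (absK (K:=K)) dom T M0 Ml nu ->
  FV' y -> FV' z -> FV' (fun f => a * y f + z f).
Proof.
move=> sn_dir hy hz; split=> [c f g hf hg | ].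
  by rewrite hy.1 // hz.1 //; ring.
case: hy => _ [j1 [l1 [C1 hC1]]]; case: hz => _ [j2 [l2 [C2 hC2]]].
have [j [l [[] [C0 [_ hC0]]]]] := sn_dir j1 l1 tt j2 l2 tt.
exists j, l, ((`|a| * C1 + C2) * C0) => f hf c hc.
have [h1 h2] := hC0 f hf c hc.
apply: le_trans (ler_normD _ _) _; rewrite normrM -mulrA mulrDl -mulrA.
by apply: lerD; [apply: ler_wpM2l => //; exact: hC1 | exact: hC2].
Qed.

Lemma sdual_bound y : inhabited Omega -> (forall l, exists m, Ml l m) -> FV' y ->
  exists j l (C : K), 0 <= C /\
    forall f, FV f -> forall c, sn f j l c -> `|y f| <= C * c.
Proof.
move=> Omega0 Ml0 [_ [j [l [C hC]]]]; exists j, l, `|C|; split=> // f hf c hc.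
by rewrite le_normM_of_leM ?normr_ge0 ?(sns_ge0 Omega0 (Ml0 l) hc) ?hC.
Qed.

End WeightedScalar.

Section DualFacts.
Variables (K : numFieldType) (V : lmodType K) (A : Type) (p : A -> V -> K).

Lemma seminorm0 a : is_seminorm (p a) -> p a 0 = 0.
Proof. by case=> _ pZ _; have := pZ 0 0; rewrite scale0r normr0 mul0r. Qed.

Lemma in_dual_bound e' : (forall a, is_seminorm (p a)) -> in_dual p e' ->
  exists a (C : K), 0 <= C /\ forall x, `|e' x| <= C * p a x.
Proof.
move=> p_sn [_ [a [C hC]]]; exists a, `|C|; split=> // x.
by rewrite le_normM_of_leM ?normr_ge0 ?hC //; case: (p_sn a).
Qed.

Variable e' : V -> K.
Hypothesis e'_lin : lin_on (fun _ => True) e'.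

Lemma lin_fun0 : e' 0 = 0.
Proof. by have := @e'_lin (-1) 0 0 I I; rewrite scaler0 addr0 mulN1r addNr. Qed.

Lemma lin_funZ a x : e' (a *: x) = a * e' x.
Proof. by have := @e'_lin a x 0 I I; rewrite !addr0 lin_fun0 addr0. Qed.

Lemma lin_funD x y : e' (x + y) = e' x + e' y.
Proof. by have := @e'_lin 1 x y I I; rewrite scale1r mul1r. Qed.

Lemma lin_funB x y : e' (x - y) = e' x - e' y.
Proof. by rewrite -scaleN1r lin_funD lin_funZ mulN1r. Qed.

End DualFacts.

Lemma eps_prod0 (K : numFieldType) (V : lmodType K) (A : Type) (p : A -> V -> K)
    (Omega X MM : Type) (emb : Omega -> X) (omega : MM -> X -> Prop)
    (dom : MM -> (Omega -> K^o) -> Prop) (T : MM -> (Omega -> K^o) -> X -> K^o)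
    (M0 : MM -> Prop) (J L : Type) (Ml : L -> MM -> Prop)
    (nu : J -> L -> MM -> Omega -> K) :
  (forall a, is_seminorm (p a)) -> eps_prod p emb omega dom T M0 Ml nu (fun _ => 0).
Proof.
move=> p_sn; split=> // [a y z _ _ | a]; first by rewrite scaler0 addr0.
exists (fun _ => False), 0; split=> [| f h ? ? [] | y _ c _].
- by split=> // I O _ _; exists [::] => f [].
- by rewrite seminorm0 // mul0r.
Qed.

(** * Real parts *)

(* [io] embeds the reals into K and [re] is a real part: K = R with [re = id]
   and K = R[i] with [re = Re] are the two instances. *)
Section RealPart.
Variables (R : realType) (K : numFieldType) (io : {rmorphism R -> K}) (re : K -> R).
Hypothesis reD : {morph re : x y / x + y}.
Hypothesis re_ioM : forall r x, re (io r * x) = r * re x.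
Hypothesis re_io : forall r, re (io r) = r.
Hypothesis norm_io_re : forall x : K, `|x| = io (re `|x|).
Hypothesis re_le_norm : forall x : K, re x <= re `|x|.
Hypothesis ler_io : forall a b, (io a <= io b) = (a <= b).

Lemma io_re x : 0 <= x -> io (re x) = x.
Proof. by move=> hx; rewrite -{2}(ger0_norm hx) norm_io_re ger0_norm. Qed.

Lemma ltr_io a b : (io a < io b) = (a < b).
Proof. by rewrite !lt_def ler_io (inj_eq (fmorph_inj io)). Qed.

Lemma io_gt0 r : (0 < io r) = (0 < r).
Proof. by rewrite -(rmorph0 io) ltr_io. Qed.

Lemma io_ge0 r : (0 <= io r) = (0 <= r).
Proof. by rewrite -(rmorph0 io) ler_io. Qed.

Lemma re_ge0 x : 0 <= x -> 0 <= re x.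
Proof. by move=> hx; rewrite -io_ge0 io_re. Qed.

Lemma re0 : re 0 = 0.
Proof. by rewrite -(rmorph0 io) re_io. Qed.

Lemma reN x : re (- x) = - re x.
Proof. by rewrite -mulN1r -(rmorphN1 io) re_ioM mulN1r. Qed.

Lemma reB x y : re (x - y) = re x - re y.
Proof. by rewrite reD reN. Qed.

Lemma re_sum (I : Type) (s : seq I) (F : I -> K) :
  re (\sum_(i <- s) F i) = \sum_(i <- s) re (F i).
Proof. exact: (big_morph re reD re0). Qed.

Lemma normr_re x : `|re x| <= re `|x|.
Proof.
rewrite ler_norml re_le_norm andbT lerNl -reN.
by apply: le_trans (re_le_norm _) _; rewrite normrN.
Qed.

Lemma normr_io r : `|io r| = io `|r|.
Proof.
have [r0|r0] := lerP 0 r; first by rewrite !ger0_norm ?io_ge0.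
by rewrite !ltr0_norm ?rmorphN // -(rmorph0 io) ltr_io.
Qed.

Lemma exists_natr_gt (x : K) : 0 <= x -> exists n : nat, x < n%:R.
Proof.
move=> x0; exists (Num.Def.archi_bound (re x)).
rewrite -{1}(io_re x0) -(rmorph_nat io) ltr_io.
by apply: archi_boundP; apply: re_ge0.
Qed.

Lemma invn_le (e : K) : 0 < e -> exists N, forall n, (N <= n)%N -> n.+1%:R^-1 <= e.
Proof.
move=> e0; have [N hN] : exists N : nat, e^-1 < N%:R by apply: exists_natr_gt; rewrite invr_ge0 ltW.
exists N => n hn; rewrite -(invrK e) lef_pV2 ?posrE ?invr_gt0 ?ltr0Sn //.
by apply: ltW (lt_le_trans hN _); rewrite ler_nat ltnW.
Qed.

Section Separation.
Variables (V : lmodType K) (A : Type) (p : A -> V -> K) (G : (V -> K) -> Prop).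
Hypothesis p_hausdorff : nontrivial_lc_hausdorff p.
Hypothesis G_dual : forall e', G e' -> in_dual p e'.
Hypothesis G_bornological : determines_boundedness p G.

Lemma bornological_separates x : (forall e', G e' -> e' x = 0) -> x = 0.
Proof.
move=> Gx; case: p_hausdorff => _ p_sn _ p_sep _; apply: p_sep => a.
have [pa_ge0 paZ _] := p_sn a.
have [C hC] : exists C, forall k : nat, p a (k%:R *: x) <= C.
  have bnd : lc_bounded p (fun v => exists k : nat, v = k%:R *: x).
    apply: G_bornological => e' he'; exists 0 => _ [k ->].
    by rewrite (lin_funZ (G_dual he').1) Gx // mulr0 normr0.
  by have [C hC] := bnd a; exists C => k; apply: hC; exists k.
have C0 : 0 <= C by move: (hC 0%N); rewrite scale0r seminorm0.
apply/eqP; have := pa_ge0 x; rewrite le0r => /orP[/eqP // | px].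
have [n] := exists_natr_gt (divr_ge0 C0 (pa_ge0 x)).
by rewrite ltr_pdivrMr // -normr_nat -paZ => /lt_geF; rewrite hC.
Qed.

End Separation.

(** * A theorem of the alternative on compact convex sets *)

Section CompactConvexAlternative.
Variables (Omega X MM : Type) (emb : Omega -> X) (omega : MM -> X -> Prop).
Variables (M0 : MM -> Prop) (dom : MM -> (Omega -> K^o) -> Prop).
Variables (T : MM -> (Omega -> K^o) -> X -> K^o).
Variables (J L : Type) (Ml : L -> MM -> Prop) (nu : J -> L -> MM -> Omega -> K).
Hypothesis T_linear : linear_family omega dom T.
Hypothesis nu_ge0 : forall j l m x, Ml l m -> 0 <= nu j l m x.
Hypothesis omega_emb : forall l m x, Ml l m -> omega m (emb x).
Hypothesis sn_dir : sn_directed emb omega (absK (K:=K)) dom T M0 Ml nu.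
Hypotheses (Omega0 : inhabited Omega) (J0 : inhabited J) (L0 : inhabited L).
Hypothesis Ml0 : forall l, exists m, Ml l m.
Variable C : (Omega -> K^o) -> Prop.
Hypothesis C_compact : s_compact emb omega dom T M0 Ml nu C.
Hypothesis C_convex : s_abs_convex C.
Hypothesis C0 : C (fun _ => 0).

Local Notation FW := (FVs emb omega dom T M0 Ml nu).
Local Notation FW' := (sdual emb omega dom T M0 Ml nu).
Local Notation sn := (sns emb T Ml nu).

Definition cont_at (phi : (Omega -> K^o) -> R) f := forall eta : R, 0 < eta ->
  exists j l (r : R), 0 < r /\ forall h, FW h -> forall c, c < io r ->
    sn (fun w => h w - f w) j l c -> `|phi h - phi f| <= eta.

Lemma cont_re_sdual y f : FW' y -> FW f -> cont_at (fun h => re (y h)) f.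
Proof.
move=> hy hf eta eta0.
have [j [l [Cy [Cy0 hCy]]]] := sdual_bound nu_ge0 Omega0 Ml0 hy.
have C1 : 0 < re Cy + 1 by rewrite ltr_wpDl ?re_ge0.
exists j, l, (eta / (re Cy + 1)); split=> [|h hh c hc hs]; first exact: divr_gt0.
have := hCy _ (FVsB T_linear nu_ge0 omega_emb hh hf) c hs.
rewrite (sdualB T_linear nu_ge0 omega_emb hy hh hf) -reB => hyc.
apply: le_trans (normr_re _) _; rewrite -ler_io -norm_io_re.
apply: le_trans hyc _.
apply: le_trans (_ : Cy * io (eta / (re Cy + 1)) <= _).
  by apply: ler_wpM2l => //; apply: ltW.
rewrite -{1}(io_re Cy0) -rmorphM ler_io mulrA ler_pdivrMr // mulrC ler_pM2l //.
by rewrite lerDl.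
Qed.

Lemma cont_const (k : R) f : cont_at (fun _ => k) f.
Proof.
move=> eta eta0; case: J0 => j; case: L0 => l.
by exists j, l, 1; split=> // *; rewrite subrr normr0 ltW.
Qed.

Lemma cont_add phi psi f : FW f -> cont_at phi f -> cont_at psi f ->
  cont_at (fun h => phi h + psi h) f.
Proof.
move=> hf c1 c2 eta eta0.
have e2 : 0 < eta / 2 by rewrite divr_gt0.
have [j1 [l1 [r1 [r10 H1]]]] := c1 _ e2; have [j2 [l2 [r2 [r20 H2]]]] := c2 _ e2.
have [j [l [[] [D [D0 HD]]]]] := sn_dir j1 l1 tt j2 l2 tt.
have D_io : io (re D) = D by rewrite io_re ?ltW.
set r := Num.min r1 r2.
exists j, l, (r / re D); split=> [|h hh c hc hs].
  by rewrite divr_gt0 ?lt_min ?r10 // -io_gt0 D_io.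
have [s1 s2] := HD _ (FVsB T_linear nu_ge0 omega_emb hh hf) c hs.
have hcr : D * c < io r.
  by move: hc; rewrite rmorphM fmorphV D_io ltr_pdivlMr // mulrC.
have hr1 : D * c < io r1 by apply: lt_le_trans hcr _; rewrite ler_io ge_min lexx.
have hr2 : D * c < io r2 by rewrite (lt_le_trans hcr) // ler_io ge_min lexx orbT.
rewrite opprD addrACA (splitr eta); apply: le_trans (ler_normD _ _) _.
by apply: lerD; [exact: H1 s1 | exact: H2 s2].
Qed.

Lemma cont_sum n (phi : nat -> (Omega -> K^o) -> R) f : FW f ->
  (forall k, (k < n)%N -> cont_at (phi k) f) ->
  cont_at (fun h => \sum_(k < n) phi k h) f.
Proof.
move=> hf; elim: n => [|n IH] H.
  by under eq_fun do rewrite big_ord0; exact: cont_const.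
under eq_fun do rewrite big_ord_recr.
by apply: cont_add (IH _) (H n _) => // k kn; apply/H/ltnW.
Qed.

Lemma cont_comp (F : R -> R) phi f : cont_at phi f ->
  (forall eta, 0 < eta -> exists2 d, 0 < d &
     forall t, `|t - phi f| <= d -> `|F t - F (phi f)| <= eta) ->
  cont_at (fun h => F (phi h)) f.
Proof.
move=> hc hF eta eta0; have [d d0 hd] := hF _ eta0.
have [j [l [r [r0 H]]]] := hc _ d0; exists j, l, r; split=> // h hh c hcr hs.
exact/hd/(H h hh c hcr hs).
Qed.

Lemma open_superlevel (phi : (Omega -> K^o) -> R) a :
  (forall f, FW f -> cont_at phi f) ->
  s_open emb omega dom T M0 Ml nu (fun f => FW f /\ a < phi f).
Proof.
move=> hc f [hf ha]; split=> //.
have e0 : 0 < (phi f - a) / 2 by rewrite divr_gt0 // subr_gt0.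
have [j [l [r [r0 H]]]] := hc f hf _ e0.
exists j, l, (io r); split=> [|h hh [c [hcr hs]]]; first by rewrite io_gt0.
by split=> //; move: (H h hh c hcr hs); rewrite ler_norml => /andP[h1 h2]; lra.
Qed.

Lemma compact_min (F : (Omega -> K^o) -> R) : (forall f, FW f -> cont_at F f) ->
  exists2 f0, C f0 & forall f, C f -> F f0 <= F f.
Proof.
move=> F_cont; apply: contrapT => no_min.
pose I := {f1 | C f1}.
have cover f : C f -> exists i : I, FW f /\ F (sval i) < F f.
  move=> Cf; apply: contrapT => not_lt; apply: no_min; exists f => // h Ch.
  rewrite leNgt; apply/negP => lt_hf; apply: not_lt.
  by exists (exist _ h Ch); split=> //; exact: C_compact.1.
have [s hs] := C_compact.2 I (fun i f => FW f /\ F (sval i) < F f)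
  (fun i => open_superlevel (a := F (sval i)) F_cont) cover.
have [i0 i0_min] := exists_seq_min (fun i : I => F (sval i)) (exist _ _ C0) s.
have [i i_s [_ lt_i]] := hs _ (svalP i0).
by have := i0_min i i_s; rewrite leNgt lt_i.
Qed.

Section Variational.
Variables (n : nat) (h : nat -> (Omega -> K^o) -> K) (eps : R).
Hypothesis h_dual : forall k, (k < n)%N -> FW' (h k).

Definition sqdist_orthant f := \sum_(k < n) sqdist_ge eps (re (h k f)).

Lemma sqdist_orthant_cont f : FW f -> cont_at sqdist_orthant f.
Proof.
move=> hf; apply: (cont_sum (phi := fun k g => sqdist_ge eps (re (h k g)))) => // k kn.
apply: (cont_comp (F := sqdist_ge eps)); first exact: cont_re_sdual (h_dual kn) hf.
by move=> eta eta0; apply: sqdist_ge_cont.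
Qed.

Lemma minimizer_variational f0 : C f0 ->
  (forall f, C f -> sqdist_orthant f0 <= sqdist_orthant f) -> forall f, C f ->
  \sum_(k < n) pos_part (eps - re (h k f0)) * (re (h k f) - re (h k f0)) <= 0.
Proof.
(* Compare f0 with (1 - t) f0 + t f and let t tend to 0. *)
move=> Cf0 f0_min f Cf.
pose lam k := pos_part (eps - re (h k f0)); pose d k := re (h k f) - re (h k f0).
change (\sum_(k < n) lam k * d k <= 0).
apply: (@le0_of_le_small _ _ ((\sum_(k < n) d k ^+ 2) / 2)) => t t0 t1.
pose ft w := io (1 - t) *: f0 w + io t *: f w.
have Cft : C ft.
  apply: C_convex => //; rewrite !normr_io !ger0_norm; [|lra|lra].
  by rewrite -rmorphD subrK rmorph1.
have re_ft k : (k < n)%N -> re (h k ft) = re (h k f0) + t * d k.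
  move=> kn; rewrite (sdual_comb T_linear nu_ge0 omega_emb _ _ (h_dual kn)
    (C_compact.1 _ Cf0) (C_compact.1 _ Cf)).
  by rewrite reD !re_ioM /d; ring.
have ft_le : sqdist_orthant ft <=
    \sum_(k < n) (lam k ^+ 2 - 2 * lam k * (t * d k) + (t * d k) ^+ 2).
  apply: ler_sum => -[k kn] _; rewrite /sqdist_ge re_ft //.
  by rewrite opprD addrA; exact: pos_part_sqrB.
have := le_trans (f0_min _ Cft) ft_le.
rewrite -subr_ge0 -sumrB.
have -> : \sum_(k < n) (lam k ^+ 2 - 2 * lam k * (t * d k) + (t * d k) ^+ 2
      - sqdist_ge eps (re (h k f0))) =
    \sum_(k < n) t * (t * d k ^+ 2 - 2 * (lam k * d k)).
  by apply: eq_bigr => k _; rewrite /sqdist_ge -/(lam k); ring.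
by rewrite -mulr_sumr sumrB -!mulr_sumr pmulr_rge0 // subr_ge0; lra.
Qed.

Lemma compact_convex_alternative :
  (forall lam : nat -> R, (forall k, 0 <= lam k) -> 0 < \sum_(k < n) lam k ->
     exists2 f, C f & eps * \sum_(k < n) lam k < \sum_(k < n) lam k * re (h k f)) ->
  exists2 f, C f & forall k, (k < n)%N -> eps <= re (h k f).
Proof.
(* At a minimiser f0 of the distance to the orthant, the weights
   (eps - Re h_k f0)^+ violate the variational inequality. *)
move=> separating; have [f0 Cf0 f0_min] := compact_min sqdist_orthant_cont.
apply: contrapT => no_common; pose lam k := pos_part (eps - re (h k f0)).
have [k0 k0n lt_k0] : exists2 k, (k < n)%N & re (h k f0) < eps.
  apply: contrapT => hn; apply: no_common; exists f0 => // k kn.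
  by rewrite leNgt; apply/negP => lt; apply: hn; exists k.
have lam_gt0 : 0 < \sum_(k < n) lam k.
  rewrite (bigD1 (Ordinal k0n)) //= ltr_pwDl ?sumr_ge0 // => [|k _].
    by rewrite /lam /pos_part subr_ge0 ltW // subr_gt0.
  exact: pos_part_ge0.
have [f Cf lt_f] := separating lam (fun k => pos_part_ge0 _) lam_gt0.
have := minimizer_variational Cf0 f0_min Cf.
under eq_bigr do rewrite mulrBr; rewrite sumrB.
have : \sum_(k < n) lam k * re (h k f0) <= eps * \sum_(k < n) lam k.
  rewrite mulr_sumr; apply: ler_sum => k _.
  by rewrite -subr_ge0 (mulrC eps) -mulrBr; exact: pos_part_mul_ge0.
lra.
Qed.

End Variational.

End CompactConvexAlternative.

Section Construction.
Variables (V : lmodType K) (A : Type) (p : A -> V -> K) (G : (V -> K) -> Prop).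
Variables (Omega X MM : Type) (emb : Omega -> X) (omega : MM -> X -> Prop).
Variables (M0 Mtop : MM -> Prop) (dom : MM -> (Omega -> K^o) -> Prop).
Variables (T : MM -> (Omega -> K^o) -> X -> K^o) (nu : MM -> Omega -> K).
Variables (JW LW : Type) (MlW : LW -> MM -> Prop) (nuW : JW -> LW -> MM -> Omega -> K).
Variables (U : MM -> X -> Prop) (g : MM -> X -> V).

Local Notation MlV := (fun (_ : unit) m => Mtop m).
Local Notation nuV := (fun (_ _ : unit) m x => nu m x).
Local Notation FV := (FVs emb omega dom T M0 MlV nuV).
Local Notation FV' := (sdual emb omega dom T M0 MlV nuV).
Local Notation normV f c := (sns emb T MlV nuV f tt tt c).
Local Notation FW := (FVs emb omega dom T M0 MlW nuW).
Local Notation FW' := (sdual emb omega dom T M0 MlW nuW).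

Hypothesis T_linear : linear_family omega dom T.
Hypotheses (Omega0 : inhabited Omega) (Mtop0 : exists m, Mtop m).
Hypothesis nu_ge0 : forall m x, Mtop m -> 0 <= nu m x.
Hypothesis omega_top : forall m x, Mtop m -> omega m (emb x).
Hypotheses (JW0 : inhabited JW) (LW0 : inhabited LW).
Hypothesis MlW0 : forall l, exists m, MlW l m.
Hypothesis MlW_top : forall l m, MlW l m -> Mtop m.
Hypothesis nuW_ge0 : forall j l m x, MlW l m -> 0 <= nuW j l m x.
Hypothesis snW_dir : sn_directed emb omega (absK (K:=K)) dom T M0 MlW nuW.

Definition BFV f := FV f /\ normV f 1.

Hypothesis BFV_compact : s_compact emb omega dom T M0 MlW nuW BFV.

Let nuV_ge0 j l m x : MlV l m -> 0 <= nuV j l m x.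
Proof. exact: nu_ge0. Qed.
Let omegaV_emb l m x : MlV l m -> omega m (emb x).
Proof. exact: omega_top. Qed.
Let omegaW_emb l m x : MlW l m -> omega m (emb x).
Proof. by move/MlW_top; exact: omega_top. Qed.

Lemma normV_ge0 f c : normV f c -> 0 <= c.
Proof. by apply: (sns_ge0 nuV_ge0 Omega0); case: Mtop0 => m; exists m. Qed.

Lemma FV_normV f : FV f -> exists c, normV f c.
Proof. by case=> _ _ /(_ tt tt tt). Qed.

Lemma normVZ f a c : FV f -> normV f c -> normV (fun w => a *: f w) (`|a| * c).
Proof.
move=> [df _ _] hc; have := sns_comb T_linear nuV_ge0 omegaV_emb a 0 df df hc hc.
have -> : (fun w => a *: f w + 0 *: f w) = (fun w => a *: f w).
  by apply: funext => w; rewrite scale0r addr0.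
by rewrite normr0 mul0r addr0.
Qed.

Lemma BFV0 : BFV (fun _ => 0).
Proof.
split; first exact: (FVs0 M0 nuV T_linear omegaV_emb).
move=> x m hm; rewrite /absK (linfam_T0 T_linear) ?normr0 ?mul0r //.
exact: omega_top.
Qed.

Lemma BFV_convex : s_abs_convex BFV.
Proof.
move=> f h a b [hf nf] [hh nh] hab.
split; first exact: (FVs_comb T_linear nuV_ge0 omegaV_emb).
apply: sns_le hab; rewrite -{1}(mulr1 `|a|) -{1}(mulr1 `|b|).
by apply: (sns_comb T_linear nuV_ge0 omegaV_emb); [case: hf | case: hh | |].
Qed.

Lemma BFV_scale f c : FV f -> normV f c -> 0 < c -> BFV (fun w => c^-1 *: f w).
Proof.
move=> hf hc c0; split; first exact: (FVsZ T_linear nuV_ge0 omegaV_emb).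
have := normVZ c^-1 hf hc; rewrite normfV gtr0_norm // mulVf //.
exact: lt0r_neq0.
Qed.

Lemma FV_FW f : FV f -> FW f.
Proof.
move=> hf; have [c hc] := FV_normV hf; have c0 := normV_ge0 hc.
have c1 : 0 < c + 1 by rewrite ltr_wpDl.
have hB := BFV_scale hf (sns_le hc (ltW (ltr_pwDr ltr01 (lexx c)))) c1.
have := FVsZ T_linear nuW_ge0 omegaW_emb (c + 1) (BFV_compact.1 _ hB).
have -> // : (fun w => (c + 1) *: ((c + 1)^-1 *: f w)) = f.
by apply: funext => w; rewrite scalerA mulfV ?scale1r // lt0r_neq0.
Qed.

Lemma sdualW_homogeneous z a f : FW' z -> FV f -> z (fun w => a *: f w) = a * z f.
Proof. by move=> hz /FV_FW; apply: (sdualZ T_linear omegaW_emb). Qed.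

Lemma sdualW_sub y z : FW' y -> FW' z -> FW' (fun f => y f - z f).
Proof.
move=> hy hz; have := sdual_lin_closed (-1) snW_dir hz hy.
have -> // : (fun f => -1 * z f + y f) = (fun f => y f - z f).
by apply: funext => f; rewrite mulN1r addrC.
Qed.

Lemma sdualW_le_normV z t : FW' z -> 0 <= t -> (forall f, BFV f -> `|z f| <= t) ->
  forall f c, FV f -> normV f c -> `|z f| <= t * c.
Proof.
move=> hz t0 hB f c hf hc; have c0 := normV_ge0 hc.
apply: (le_of_le_addM t0) => e e0.
have ce : 0 < c + e by rewrite ltr_wpDl.
have := hB _ (BFV_scale hf (sns_le hc (ltW (ltr_pwDr e0 (lexx c)))) ce).
rewrite sdualW_homogeneous // normrM normfV (gtr0_norm ce) ler_pdivrMl //.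
by rewrite mulrC mulrDr.
Qed.

Lemma BFVZ a f : BFV f -> `|a| <= 1 -> BFV (fun w => a *: f w).
Proof.
move=> Bf a1; have := BFV_convex Bf BFV0 (a := a) (b := 0).
have -> : (fun w => a *: f w + 0 *: (0 : K^o)) = (fun w => a *: f w).
  by apply: funext => w; rewrite scaler0 addr0.
by apply; rewrite normr0 addr0.
Qed.

(** * Approximation by combinations of evaluations on U *)

Hypothesis U_FW' : forall m x, U m x -> FW' (fun f => T m f x).
Hypothesis U_FV' : forall m x, U m x -> FV' (fun f => T m f x).
Hypothesis U_uniq : forall f, FV f -> (forall m x, U m x -> T m f x = 0) ->
  forall w, f w = 0.

Inductive Uspan : ((Omega -> K^o) -> K) -> V -> Prop :=
  | Uspan0 : Uspan (fun _ => 0) 0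
  | Uspan_point m x : U m x -> Uspan (fun f => T m f x) (g m x)
  | Uspan_comb a z v z' v' : Uspan z v -> Uspan z' v' ->
      Uspan (fun f => a * z f + z' f) (a *: v + v').

Lemma Uspan_FW' z v : Uspan z v -> FW' z.
Proof.
elim=> [|m x /U_FW' //|a z1 v1 z2 v2 _ h1 _ h2]; first exact: sdual_cst0.
exact: sdual_lin_closed.
Qed.

Lemma Uspan_bounded z v : Uspan z v -> exists M, forall f, BFV f -> `|z f| <= M.
Proof.
elim=> [|m x /U_FV' hT|a z1 v1 z2 v2 _ [M1 h1] _ [M2 h2]].
- by exists 0 => f _; rewrite normr0.
- have [[] [[] [C [_ hC]]]] := sdual_bound nuV_ge0 Omega0 (fun _ => Mtop0) hT.
  by exists C => f [hf nf]; rewrite -(mulr1 C); exact: hC.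
- exists (`|a| * M1 + M2) => f hf; apply: le_trans (ler_normD _ _) _.
  by rewrite normrM; apply: lerD; [apply: ler_wpM2l => //; exact: h1 | exact: h2].
Qed.

Lemma Uspan_sum n (a : nat -> K) (z : nat -> (Omega -> K^o) -> K) (v : nat -> V) :
  (forall k, (k < n)%N -> Uspan (z k) (v k)) ->
  Uspan (fun f => \sum_(k < n) a k * z k f) (\sum_(k < n) a k *: v k).
Proof.
elim: n => [|n IH] hzv.
  under eq_fun do rewrite big_ord0.
  by rewrite big_ord0; exact: Uspan0.
have -> : (fun f => \sum_(k < n.+1) a k * z k f) =
    (fun f => a n * z n f + \sum_(k < n) a k * z k f).
  by apply: funext => f; rewrite big_ord_recr addrC.
rewrite big_ord_recr [X in Uspan _ X]addrC; apply: Uspan_comb; first exact: hzv.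
by apply: IH => k kn; apply/hzv/ltnW.
Qed.

Section Density.
Variables (y : (Omega -> K^o) -> K) (e : R).
Hypotheses (hy : FW' y) (e0 : 0 < e).

Lemma Uspan_near f : BFV f -> exists z v, Uspan z v /\ re (y f - z f) < e.
Proof.
move=> [hf _]; apply: contrapT => far.
have far_all z v : Uspan z v -> e <= re (y f - z f).
  by move=> hzv; rewrite leNgt; apply/negP => lt; apply: far; exists z, v.
have f0 : f = (fun _ => 0).
  (* [y f / T m f x] times the single evaluation at (m, x) would approximate y at f. *)
  apply: funext => w; apply: U_uniq => // m x hU; apply: contrapT => /eqP Tf0.
  have := far_all _ _ (Uspan_comb (y f / T m f x) (Uspan_point hU) Uspan0).
  by rewrite /= addr0 divfK // subrr re0 leNgt e0.
have := far_all _ _ Uspan0; rewrite subr0 f0 (sdual0 T_linear omegaW_emb hy) re0.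
by rewrite leNgt e0.
Qed.

Hypothesis no_approx :
  ~ (exists z v, Uspan z v /\ forall f, BFV f -> `|y f - z f| <= io e).

Lemma far_from_Uspan z v : Uspan z v -> exists2 f, BFV f & e < re (y f - z f).
Proof.
move=> hzv; apply: contrapT => near_all; apply: no_approx.
exists z, v; split=> // f Bf; rewrite norm_io_re ler_io leNgt; apply/negP => lt.
have [a a1 ha] := exists_rotation (y f - z f).
apply: near_all; exists (fun w => a *: f w); first exact: BFVZ.
have hfV : FV f by case: Bf.
by rewrite (sdualW_homogeneous a hy hfV) (sdualW_homogeneous a (Uspan_FW' hzv) hfV) -mulrBr ha.
Qed.

Lemma far_from_Uspan_avg n (z : nat -> (Omega -> K^o) -> K) (v : nat -> V) :
  (forall k, (k < n)%N -> Uspan (z k) (v k)) ->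
  forall lam : nat -> R, (forall k, 0 <= lam k) -> 0 < \sum_(k < n) lam k ->
  exists2 f, BFV f & e * \sum_(k < n) lam k < \sum_(k < n) lam k * re (y f - z k f).
Proof.
move=> hzv lam lam0 L0; set L := \sum_(k < n) lam k.
have [f Bf] := far_from_Uspan (Uspan_sum (fun k => io (lam k / L)) hzv).
rewrite /= reB re_sum => lt_f; exists f => //.
have -> : \sum_(k < n) lam k * re (y f - z k f) =
    L * (re (y f) - \sum_(k < n) re (io (lam k / L) * z k f)).
  rewrite mulrBr mulr_sumr /L mulr_suml -sumrB; apply: eq_bigr => k _.
  by rewrite reB re_ioM; field; exact: lt0r_neq0.
by rewrite mulrC ltr_pM2l.
Qed.

End Density.

Lemma Uspan_dense y (eps : K) : FW' y -> 0 < eps ->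
  exists z v, Uspan z v /\ forall f, BFV f -> `|y f - z f| <= eps.
Proof.
move=> hy eps0; pose e := re eps; have e0 : 0 < e by rewrite -io_gt0 io_re ?ltW.
rewrite -(io_re (ltW eps0)) -/e; apply: contrapT => no_approx.
pose I := {zv : ((Omega -> K^o) -> K) * V | Uspan zv.1 zv.2}.
pose i0 : I := exist _ (fun _ => 0, 0) Uspan0.
pose O (i : I) f := FW f /\ - e < re ((sval i).1 f - y f).
have O_open i : s_open emb omega dom T M0 MlW nuW (O i).
  apply: open_superlevel => f hf.
  apply: (cont_re_sdual T_linear nuW_ge0 omegaW_emb Omega0 MlW0) => //.
  exact: sdualW_sub (Uspan_FW' (svalP i)) hy.
have O_cover f : BFV f -> exists i, O i f.
  move=> Bf; have [z [v [hzv lt_zv]]] := Uspan_near hy e0 Bf.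
  exists (exist _ (z, v) hzv); split; first exact: BFV_compact.1.
  by rewrite /= -opprB reN ltrN2.
have [s s_cover] := BFV_compact.2 I O O_open O_cover.
pose z k := (sval (List.nth k s i0)).1; pose v k := (sval (List.nth k s i0)).2.
have hzv k : (k < List.length s)%N -> Uspan (z k) (v k).
  by move=> _; exact: svalP (List.nth k s i0).
have h_dual k : (k < List.length s)%N -> FW' (fun f => y f - z k f).
  by move/hzv/Uspan_FW'; exact: sdualW_sub.
have [f Bf ge_f] := compact_convex_alternative T_linear nuW_ge0 omegaW_emb snW_dir
  Omega0 JW0 LW0 MlW0 BFV_compact BFV_convex BFV0 h_dual (far_from_Uspan_avg hy no_approx hzv).
have [i i_s [_ lt_i]] := s_cover f Bf.
have [k [/ssrnat.ltP ks def_i]] := List.In_nth s i i0 i_s.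
by move: lt_i (ge_f k ks); rewrite -def_i -opprB reN ltrN2 leNgt => ->.
Qed.

(** * The lift of FW(Omega)' to E *)

Hypothesis p_hausdorff : nontrivial_lc_hausdorff p.
Hypothesis E_loc_complete : locally_complete p.
Hypothesis G_dual : forall e', G e' -> in_dual p e'.
Hypothesis G_bornological : determines_boundedness p G.

Definition represents (e' : V -> K) f :=
  FV f /\ forall m x, U m x -> T m f x = e' (g m x).

Hypothesis G_represented : forall e', G e' -> exists f, represents e' f.

Let p_seminorm a : is_seminorm (p a).
Proof. by case: p_hausdorff. Qed.
Let G_lin e' : G e' -> lin_on (fun _ => True) e'.
Proof. by case/G_dual. Qed.

Definition repr_ball x := forall e' f, G e' -> represents e' f ->
  forall c, normV f c -> `|e' x| <= c.

Lemma repr_ball0 : repr_ball 0.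
Proof. by move=> e' f /G_lin he _ c /normV_ge0; rewrite lin_fun0 // normr0. Qed.

Lemma repr_ball_closed : lc_closed p repr_ball.
Proof.
move=> x x_lim e' f he hf c hc; have [a [C [C0 hC]]] := in_dual_bound p_seminorm (G_dual he).
apply: (le_of_le_addM ler01) => eps eps0; rewrite mul1r.
have C1 : 0 < C + 1 by rewrite ltr_wpDl.
have [d [Dd pd]] := x_lim a (eps / (C + 1)) (divr_gt0 eps0 C1).
rewrite -(subrK d x) (lin_funD (G_lin he)) addrC.
apply: le_trans (ler_normD _ _) _; apply: lerD; first exact: Dd hc.
apply: le_trans (hC _) _; apply: le_trans (_ : C * (eps / (C + 1)) <= _).
  by apply: ler_wpM2l => //; apply: ltW.
by rewrite mulrA ler_pdivrMr // mulrC ler_pM2l // lerDl.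
Qed.

Lemma repr_ball_bounded : lc_bounded p repr_ball.
Proof.
apply: G_bornological => e' he; have [f hf] := G_represented he.
have [c hc] := FV_normV hf.1; exists c => x Dx; exact: Dx hc.
Qed.

Lemma repr_ball_convex : abs_convex repr_ball.
Proof.
move=> x y a b Dx Dy hab e' f he hf c hc; have e'_lin := G_lin he.
rewrite (lin_funD e'_lin) !(lin_funZ e'_lin).
apply: le_trans (ler_normD _ _) _; rewrite !normrM.
apply: le_trans (_ : `|a| * c + `|b| * c <= _).
  by apply: lerD; apply: ler_wpM2l => //; [exact: Dx hc | exact: Dy hc].
by rewrite -mulrDl ler_piMl ?(normV_ge0 hc).
Qed.

Definition pairs_with (y : (Omega -> K^o) -> K) w :=
  forall e' f, G e' -> represents e' f -> e' w = y f.

Lemma pairs_with_uniq y w w' : pairs_with y w -> pairs_with y w' -> w = w'.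
Proof.
move=> hw hw'; apply/eqP; rewrite -subr_eq0; apply/eqP.
apply: (bornological_separates p_hausdorff G_dual G_bornological) => e' he.
have [f hf] := G_represented he.
by rewrite (lin_funB (G_lin he)) (hw _ _ he hf) (hw' _ _ he hf) subrr.
Qed.

Lemma Uspan_pairs_with z v : Uspan z v -> pairs_with z v.
Proof.
elim=> [|m x hU|a z1 v1 z2 v2 _ h1 _ h2] e' f he hf.
- exact: lin_fun0 (G_lin he).
- by rewrite hf.2.
- by rewrite (lin_funD (G_lin he)) (lin_funZ (G_lin he)) (h1 _ _ he hf) (h2 _ _ he hf).
Qed.

Lemma pairs_with_in_dil z w t : FW' z -> pairs_with z w -> 0 < t ->
  (forall f, BFV f -> `|z f| <= t) -> in_dil repr_ball t w.
Proof.
move=> hz hw t0 hB; exists (t^-1 *: w); split; last first.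
  by rewrite scalerA mulfV ?scale1r // lt0r_neq0.
move=> e' f he hf c hc.
rewrite (lin_funZ (G_lin he)) (hw _ _ he hf) normrM normfV (gtr0_norm t0).
by rewrite ler_pdivrMl // (sdualW_le_normV hz (ltW t0) hB hf.1 hc).
Qed.

Section ApproximatingSequence.
Variables (y : (Omega -> K^o) -> K) (z : nat -> (Omega -> K^o) -> K) (v : nat -> V).
Hypothesis hy : FW' y.
Hypothesis zv_span : forall n, Uspan (z n) (v n).
Hypothesis zv_approx : forall n f, BFV f -> `|y f - z n f| <= n.+1%:R^-1.

Lemma approx_in_dil n : exists k : nat, in_dil repr_ball k%:R (v n).
Proof.
have [M hM] := Uspan_bounded (zv_span n).
have M_ge0 : 0 <= M := le_trans (normr_ge0 _) (hM _ BFV0).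
have [k ltMk] := exists_natr_gt M_ge0; exists k.
apply: pairs_with_in_dil (Uspan_FW' (zv_span n)) (Uspan_pairs_with (zv_span n)) _ _.
  exact: le_lt_trans ltMk.
by move=> f /hM /le_trans; apply; apply: ltW.
Qed.

Lemma approx_cauchy eps : 0 < eps -> exists N, forall n m, (N <= n)%N -> (N <= m)%N ->
  in_dil repr_ball eps (v n - v m).
Proof.
move=> eps0; have [N hN] := invn_le (divr_gt0 eps0 (ltr0Sn _ 1)).
exists N => n m Nn Nm; apply: pairs_with_in_dil => //.
- exact: sdualW_sub (Uspan_FW' (zv_span n)) (Uspan_FW' (zv_span m)).
- move=> e' f he hf; rewrite (lin_funB (G_lin he)).
  by rewrite (Uspan_pairs_with (zv_span n) he hf) (Uspan_pairs_with (zv_span m) he hf).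
move=> f Bf /=; rewrite (_ : z n f - z m f = (y f - z m f) - (y f - z n f)); last by ring.
apply: le_trans (ler_normB _ _) _; rewrite (splitr eps).
by apply: lerD; apply: le_trans (zv_approx _ Bf) _; apply: hN.
Qed.

Lemma approx_limit_pairs_with w :
  (forall eps, 0 < eps -> exists N, forall n, (N <= n)%N ->
     in_dil repr_ball eps (v n - w)) -> pairs_with y w.
Proof.
move=> w_lim e' f he hf; have [c hc] := FV_normV hf.1; have c0 := normV_ge0 hc.
apply/eqP; rewrite -subr_eq0; apply/eqP; apply: (norm_eq0_of_leM (addr_ge0 c0 c0)).
move=> eps eps0; have [N1 hN1] := w_lim eps eps0; have [N2 hN2] := invn_le eps0.
pose n := maxn N1 N2; have [d [Dd vw]] := hN1 n (leq_maxl _ _).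
have le_vw : `|e' (v n) - e' w| <= eps * c.
  rewrite -(lin_funB (G_lin he)) vw (lin_funZ (G_lin he)) normrM (gtr0_norm eps0).
  by apply: ler_wpM2l; [exact: ltW | exact: Dd hc].
have le_yv : `|y f - e' (v n)| <= eps * c.
  rewrite (Uspan_pairs_with (zv_span n) he hf).
  apply: (sdualW_le_normV (sdualW_sub hy (Uspan_FW' (zv_span n))) (ltW eps0) _ hf.1 hc).
  by move=> h Bh; apply: le_trans (zv_approx n Bh) (hN2 n (leq_maxr _ _)).
rewrite (_ : e' w - y f = - ((e' (v n) - e' w) + (y f - e' (v n)))); last by ring.
by rewrite normrN mulrDr; apply: le_trans (ler_normD _ _) _; apply: lerD.
Qed.

End ApproximatingSequence.

Lemma exists_pairs_with y : FW' y -> exists w, pairs_with y w.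
Proof.
move=> hy.
have approx n : exists zv : ((Omega -> K^o) -> K) * V, Uspan zv.1 zv.2 /\
    forall f, BFV f -> `|y f - zv.1 f| <= n.+1%:R^-1.
  have n_gt0 : 0 < n.+1%:R^-1 :> K by rewrite invr_gt0 ltr0Sn.
  have [z [v hzv]] := Uspan_dense hy n_gt0.
  by exists (z, v).
have [zv hzv] := choice approx.
have zv_span n := (hzv n).1; have zv_approx n := (hzv n).2.
have [w [_ w_lim]] := E_loc_complete repr_ball_closed repr_ball_bounded
  repr_ball_convex (approx_in_dil zv_span) (approx_cauchy zv_span zv_approx).
by exists w; exact: (approx_limit_pairs_with hy zv_span zv_approx w_lim).
Qed.

Definition lift y : V :=
  if pselect (FW' y) is left hy then sval (cid (exists_pairs_with hy)) else 0.

Lemma lift_pairs_with y : FW' y -> pairs_with y (lift y).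
Proof. by rewrite /lift; case: pselect => // hy _; exact: svalP (cid _). Qed.

Lemma lift_le y c : FW' y -> (forall f, BFV f -> `|y f| <= c) ->
  forall a Ca, (forall d, repr_ball d -> p a d <= Ca) -> p a (lift y) <= Ca * c.
Proof.
move=> hy hB a Ca hCa; have [_ paZ _] := p_seminorm a.
have c0 : 0 <= c := le_trans (normr_ge0 _) (hB _ BFV0).
have Ca0 : 0 <= Ca by have := hCa 0 repr_ball0; rewrite seminorm0.
apply: (le_of_le_addM Ca0) => e e0; have ce : 0 < c + e by rewrite ltr_wpDl.
have [d [Dd ->]] : in_dil repr_ball (c + e) (lift y).
  apply: pairs_with_in_dil (lift_pairs_with hy) ce _ => // f /hB /le_trans; apply.
  by rewrite lerDl ltW.
rewrite paZ (gtr0_norm ce) -mulrDr mulrC.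
by apply: ler_wpM2r; [exact: ltW | exact: hCa].
Qed.

Lemma lift_eps_prod : eps_prod p emb omega dom T M0 MlW nuW lift.
Proof.
split.
- move=> y z hy hz yz; apply: pairs_with_uniq (lift_pairs_with hy) _ => e' f he hf.
  by rewrite (lift_pairs_with hz he hf) yz //; apply: FV_FW hf.1.
- move=> a y z hy hz; have hyz := sdual_lin_closed a snW_dir hy hz.
  apply: (pairs_with_uniq (lift_pairs_with hyz)) => e' f he hf /=.
  rewrite (lin_funD (G_lin he)) (lin_funZ (G_lin he)).
  by rewrite (lift_pairs_with hy he hf) (lift_pairs_with hz he hf).
- move=> a; have [Ca hCa] := repr_ball_bounded a.
  exists BFV, Ca; split=> //; [exact: BFV_convex | move=> y hy c hc; exact: lift_le].
Qed.

Lemma lift_polar_bounded : lc_bounded p (fun e => exists y,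
  (FW' y /\ forall f, BFV f -> `|y f| <= 1) /\ e = lift y).
Proof.
move=> a; have [Ca hCa] := repr_ball_bounded a.
by exists (Ca * 1) => _ [y [[hy hB] ->]]; exact: lift_le.
Qed.

Lemma lift_point m x : U m x -> lift (fun f => T m f x) = g m x.
Proof.
move=> hU; apply: pairs_with_uniq (lift_pairs_with (U_FW' hU)) _.
exact: Uspan_pairs_with (Uspan_point hU).
Qed.

Lemma exists_lift : exists u, [/\ eps_prod p emb omega dom T M0 MlW nuW u,
  lc_bounded p (fun e => exists y, (FW' y /\ forall f, BFV f -> `|y f| <= 1) /\ e = u y)
  & forall m x, U m x -> u (fun f => T m f x) = g m x].
Proof.
by exists lift; split; [exact: lift_eps_prod | exact: lift_polar_bounded | exact: lift_point].
Qed.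

End Construction.
End RealPart.

Lemma thm3p19_stmt_of_real_part (R : realType) (K : numFieldType)
    (io : {rmorphism R -> K}) (re : K -> R) :
  {morph re : x y / x + y} -> (forall r x, re (io r * x) = r * re x) ->
  (forall r, re (io r) = r) -> (forall x : K, `|x| = io (re `|x|)) ->
  (forall x : K, re x <= re `|x|) -> (forall a b, (io a <= io b) = (a <= b)) ->
  thm3p19_stmt K.
Proof.
move=> reD re_ioM re_io norm_io_re re_le_norm ler_io.
move=> V A p G Omega X MM emb omega M0 Mr domE TE domK TK nu JW LW MlW nuW U
  Mtop MlV nuV FV FVE FW FWE FW' normV BFV Bpolar epsE
  hE hlc hG hGb _ homV _ hOm hMt hnu0 _ hJW hLW hMlW hMlWt hnuW0 _
  _ hlinK _ _ [hdirW _] _ hcons _ hcomp hUom hUdual hUuniq g hg.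
have omega_top m x : Mtop m -> omega m (emb x) by move/homV.
have MlW_top l m : MlW l m -> Mtop m by move=> hl; apply/hMlWt; exists l.
have p_sn a : is_seminorm (p a) by case: hE.
have G_dual e' : G e' -> in_dual p e' by case: hG => + _ _; apply.
(* Consistency applied to u = 0 shows that each T_{m,x} lies in FW(Omega)'. *)
have U_FW' m x : U m x -> FW' (fun f => TK m f x).
  by move=> hU; have [] := hcons _ (eps_prod0 _ _ _ _ _ _ _ p_sn) m x (hUom _ _ hU).
have [u [u_eps u_bnd u_U]] := exists_lift reD re_ioM re_io norm_io_re re_le_norm
  ler_io hlinK hOm hMt hnu0 omega_top hJW hLW hMlW MlW_top (fun j l m x _ => hnuW0 j l m x)
  hdirW hcomp U_FW' hUdual hUuniq hE hlc G_dual hGb hg.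
exists u; split=> // m x hU; have [_ _ ->] := hcons u u_eps m x (hUom _ _ hU).
exact: u_U.
Qed.

Local Open Scope complex_scope.

Section ComplexRealPart.
Variable R : realType.

Lemma Re_realM (r : R) (x : R[i]) : complex.Re (r%:C * x) = r * complex.Re x.
Proof. by case: x => a b; simpc. Qed.

Lemma normc_real (x : R[i]) : `|x| = (complex.Re `|x|)%:C.
Proof. by rewrite normc_def. Qed.

Lemma Re_le_normc (x : R[i]) : complex.Re x <= complex.Re `|x|.
Proof.
case: x => a b; rewrite normc_def /=; apply: le_trans (ler_norm a) _.
by rewrite -sqrtr_sqr ler_sqrt ?lerDl ?sqr_ge0 // addr_ge0 ?sqr_ge0.
Qed.

Lemma lec_real (a b : R) : (a%:C <= b%:C) = (a <= b).
Proof. by rewrite lecE /= eqxx. Qed.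

End ComplexRealPart.

Theorem theorem3p19 (R : realType) : thm3p19_stmt R /\ thm3p19_stmt R[i].
Proof.
split.
- apply: (@thm3p19_stmt_of_real_part R R idfun idfun) => // x.
  exact: ler_norm.
- apply: (@thm3p19_stmt_of_real_part R R[i] (real_complex R) (@complex.Re R)).
  + exact: raddfD.
  + exact: Re_realM.
  + by [].
  + exact: normc_real.
  + exact: Re_le_normc.
  + exact: lec_real.
Qed.
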